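(* Let $\{(x_i,y_i)\}_{i=1}^n\subset\mathbb{R}^d\times\{\pm1\}$ be linearly separable (there is $w^*$ with $\mathrm{sign}(\langle w^*,x_i\rangle)=y_i$ for all $i$), and let $L(w)=\frac1n\sum_{i=1}^n\ell(y_i\langle w,x_i\rangle)$ with $\ell$ differentiable, decreasing, convex, not attaining its minimum, and $\inf\ell=0$. Let $\psi$ be a differentiable strictly convex potential on $\mathbb{R}^d$ for which mirror descent $\nabla\psi(w_{t+1})=\nabla\psi(w_t)-\eta\nabla L(w_t)$ is well defined. If $\eta$ is small enough that $\psi-\eta L$ is convex, then $L(w_t)\to0$ as $t\to\infty$, and hence $\lim_{t\to\infty}\|w_t\|=\infty$ for any norm $\|\cdot\|$ on $\mathbb{R}^d$. *)

From HB Require Import structures.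
From mathcomp Require Import all_boot all_order all_algebra.
From mathcomp Require Import all_classical all_reals all_analysis.
Set Implicit Arguments. Unset Strict Implicit. Unset Printing Implicit Defensive.
Import Order.TTheory GRing.Theory Num.Theory.
Import numFieldNormedType.Exports.
Local Open Scope ring_scope.

Definition dotv (R : realType) (d : nat) (u v : 'rV[R]_d) : R :=
  \sum_(j < d) u ord0 j * v ord0 j.

Definition convex_fun (R : realType) (V : lmodType R) (f : V -> R) : Prop :=
  forall (x y : V) (t : R), 0 <= t -> t <= 1 ->
    f (t *: x + (1 - t) *: y) <= t * f x + (1 - t) * f y.

Definition strictly_convex_fun (R : realType) (V : lmodType R) (f : V -> R) : Prop :=
  forall (x y : V) (t : R), x != y -> 0 < t -> t < 1 ->
    f (t *: x + (1 - t) *: y) < t * f x + (1 - t) * f y.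

Definition emp_loss (R : realType) (d n : nat) (l : R -> R)
  (x : 'I_n -> 'rV[R]_d) (y : 'I_n -> R) (w : 'rV[R]_d) : R :=
  n%:R^-1 * \sum_(i < n) l (y i * dotv w (x i)).

Definition is_norm (R : realType) (d : nat) (N : 'rV[R]_d -> R) : Prop :=
  [/\ forall v, 0 <= N v,
      forall v, N v = 0 -> v = 0,
      forall (a : R) v, N (a *: v) = `|a| * N v
    & forall u v, N (u + v) <= N u + N v].

(* Mirror descent satisfies the three-point inequality
   [eta (L w_(t+1) - L u) <= D u w_t - D u w_(t+1)] for the Bregman divergence
   [D] of [psi] and any comparator [u]: it is the sum of the tangent
   inequalities of [psi - eta L] and of [L] at [w_t].  With [u = w_t] it shows
   that [L w_t] is nonincreasing, and summing it gives
   [eta t (L w_t - L u) <= D u w_0], so [L w_t] tends to [inf L], which is [0]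
   on separable data.  On a ball of any norm the margins [y_i <w, x_i>] are
   bounded (all norms on R^d are equivalent), so [L] stays away from [0] there;
   hence [w_t] eventually leaves every ball. *)

From HB Require Import structures.
From mathcomp Require Import all_boot all_order all_algebra.
From mathcomp Require Import all_classical all_reals all_analysis.
From mathcomp Require Import ring lra.
Set Implicit Arguments.
Unset Strict Implicit.
Unset Printing Implicit Defensive.
Import Order.TTheory GRing.Theory Num.Theory.
Import numFieldNormedType.Exports.
Local Open Scope classical_set_scope.
Local Open Scope ring_scope.

Section Convexity.
Variable R : realType.

Lemma strictly_convex_funW (V : lmodType R) (f : V -> R) :
  strictly_convex_fun f -> convex_fun f.
Proof.
move=> sf a b t t0 t1.
have [->|ab] := eqVneq a b.
  by rewrite -scalerDl -mulrDl addrC subrK scale1r mul1r.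
have [->|tn0] := eqVneq t 0.
  by rewrite scale0r add0r subr0 scale1r mul0r add0r mul1r.
have [->|tn1] := eqVneq t 1.
  by rewrite scale1r subrr scale0r addr0 mul1r mul0r addr0.
by apply/ltW/sf; rewrite // lt_def ?tn0 // eq_sym tn1.
Qed.

Variable V : normedModType R.

(* ['d f a (b - a)] is the limit of difference quotients along [b - a]
   from the right, each of which is at most [f b - f a] by convexity. *)
Lemma convex_fun_tangent_le (f : V -> R) (a b : V) :
  convex_fun f -> differentiable f a -> f a + 'd f a (b - a) <= f b.
Proof.
move=> cf dfa; rewrite -lerBrDl -(deriveE _ dfa).
set q := fun h : R => h^-1 *: ((f \o shift a) (h *: (b - a)) - f a).
have q_cvg : q @ 0^'+ --> 'D_(b - a) f a.
  apply: cvg_trans (diff_derivable (v := b - a) dfa); apply: cvg_fmap2.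
  by apply: within_subset => // h /= /lt0r_neq0.
apply: (cvgr_to_le q_cvg); near=> h.
have h0 : 0 < h by near: h; exact: nbhs_right_gt.
have h1 : h < 1 by near: h; exact: nbhs_right_lt.
have hab : h *: (b - a) + a = h *: b + (1 - h) *: a.
  by rewrite scalerBr scalerBl scale1r addrA addrAC.
rewrite /q /= /shift hab [_ *: _]/(_ * _) ler_pdivrMl // mulrC lerBlDr.
by apply: (le_trans (cf b a h (ltW h0) (ltW h1))); lra.
Unshelve. all: by end_near.
Qed.

Definition bregman (psi : V -> R) (u w : V) : R :=
  psi u - psi w - 'd psi w (u - w).

Lemma bregman_ge0 (psi : V -> R) (u w : V) :
  convex_fun psi -> differentiable psi w -> 0 <= bregman psi u w.
Proof.
move=> cpsi dpsi; have := convex_fun_tangent_le u cpsi dpsi.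
by rewrite /bregman; lra.
Qed.

Lemma bregmanxx (psi : V -> R) (w : V) : bregman psi w w = 0.
Proof. by rewrite /bregman !subrr linear0 subrr. Qed.

End Convexity.

Section MirrorDescent.
Variables (R : realType) (V : normedModType R).
Variables (psi L : V -> R) (eta : R) (w : nat -> V).
Hypothesis psi_convex : convex_fun psi.
Hypothesis psi_diff : forall v, differentiable psi v.
Hypothesis L_convex : convex_fun L.
Hypothesis L_diff : forall v, differentiable L v.
Hypothesis eta_gt0 : 0 < eta.
Hypothesis psi_etaL_convex : convex_fun (fun v => psi v - eta * L v).
Hypothesis mirror_update :
  forall t v, 'd psi (w t.+1) v = 'd psi (w t) v - eta * 'd L (w t) v.

Lemma mirror_descent_step t u :
  eta * (L (w t.+1) - L u) <= bregman psi u (w t) - bregman psi u (w t.+1).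
Proof.
have etaL_diff : differentiable (eta *: L) (w t) by exact: differentiableZ.
have h_diff : differentiable (psi - eta *: L) (w t) by exact: differentiableB.
have dh v : 'd (psi - eta *: L) (w t) v = 'd psi (w t.+1) v.
  by rewrite mirror_update diffB // diffZ.
have tangent_h := convex_fun_tangent_le (w t.+1) psi_etaL_convex h_diff.
rewrite dh /= in tangent_h.
have tangent_L := convex_fun_tangent_le u L_convex (L_diff (w t)).
have update_u := mirror_update t (u - w t).
have split_u : 'd psi (w t.+1) (u - w t) =
    'd psi (w t.+1) (u - w t.+1) + 'd psi (w t.+1) (w t.+1 - w t).
  by rewrite -linearD addrA subrK.
have := ler_wpM2l (ltW eta_gt0) tangent_L.
rewrite /bregman mulrDr mulrBr; lra.
Qed.

Lemma mirror_descent_nonincreasing t : L (w t.+1) <= L (w t).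
Proof.
have := mirror_descent_step t (w t); rewrite bregmanxx.
have := bregman_ge0 (w t) psi_convex (psi_diff (w t.+1)).
by rewrite -[_ <= L (w t)]subr_le0 -(pmulr_rle0 _ eta_gt0); lra.
Qed.

Lemma mirror_descent_gap_le u t :
  eta * t%:R * (L (w t) - L u) + bregman psi u (w t) <= bregman psi u (w 0).
Proof.
elim: t => [|t IH]; first by rewrite mulr0 mul0r add0r.
have eta_t_ge0 : 0 <= eta * t%:R by rewrite mulr_ge0 // ltW.
have := ler_wpM2l eta_t_ge0 (mirror_descent_nonincreasing t).
have := mirror_descent_step t u.
have -> : eta * t.+1%:R * (L (w t.+1) - L u) =
    eta * t%:R * (L (w t.+1) - L u) + eta * (L (w t.+1) - L u).
  by rewrite -natr1; ring.
lra.
Qed.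

Lemma mirror_descent_cvg0 :
  (forall v, 0 <= L v) -> (forall e, 0 < e -> exists u, L u < e) ->
  L \o w @ \oo --> 0.
Proof.
move=> L_ge0 L_inf0; apply/cvgrPdist_lt => e e0.
have [u Lu] := L_inf0 (e / 2) ltac:(by rewrite divr_gt0).
near=> t.
have t_big : 2 * bregman psi u (w 0) / (eta * e) < t%:R.
  by near: t; exact: nbhs_infty_gtr.
rewrite /= sub0r normrN ger0_norm //.
rewrite ltr_pdivrMr ?mulr_gt0 // in t_big.
have gap := mirror_descent_gap_le u t.
have Bt_ge0 := bregman_ge0 u psi_convex (psi_diff (w t)).
have eta_t_ge0 : 0 <= eta * t%:R by rewrite mulr_ge0 // ltW.
rewrite ltNge; apply/negP => Le.
have gap_ge : e / 2 <= L (w t) - L u by lra.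
have := ler_wpM2l eta_t_ge0 gap_ge; lra.
Unshelve. all: by end_near.
Qed.

End MirrorDescent.

Lemma cvg0_eventually_gt (R : realFieldType) (T : Type) (f N : T -> R)
    (w : nat -> T) :
  f \o w @ \oo --> 0 ->
  (forall M, exists2 c, 0 < c & forall v, N v <= M -> c <= f v) ->
  forall M, exists t0 : nat, forall t, (t0 <= t)%N -> M < N (w t).
Proof.
move=> f_cvg f_lbound M; have [c c0 fc] := f_lbound M.
have [t0 _ Ht0] := (cvgrPdist_lt _ _).1 f_cvg c c0.
exists t0 => t /Ht0 /=; rewrite sub0r normrN ltNge.
by apply: contraNlt => /fc /le_trans; apply; exact: ler_norm.
Qed.

Section Norms.
Variables (R : realType) (d : nat) (N : 'rV[R]_d -> R).
Hypothesis N_norm : is_norm N.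

Lemma is_norm0 : N 0 = 0.
Proof. by case: N_norm => _ _ NZ _; rewrite -(scale0r 0) NZ normr0 mul0r. Qed.

Lemma is_normN v : N (- v) = N v.
Proof.
by case: N_norm => _ _ NZ _; rewrite -scaleN1r NZ normrN normr1 mul1r.
Qed.

Lemma is_norm_dist_le u v : `|N u - N v| <= N (u - v).
Proof.
case: N_norm => _ _ _ ND; rewrite ler_norml.
have := ND (u - v) v; rewrite subrK.
have := ND (v - u) u; rewrite subrK -opprB is_normN.
by move=> h1 h2; apply/andP; split; lra.
Qed.

Lemma is_norm_sum (I : finType) (f : I -> 'rV[R]_d) :
  N (\sum_i f i) <= \sum_i N (f i).
Proof.
case: N_norm => _ _ _ ND; elim/big_ind2: _ => [|u a v b ha hb|//].
  by rewrite is_norm0.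
by apply: le_trans (ND _ _) _; exact: lerD.
Qed.

Lemma coord_le_mx_norm (v : 'rV[R]_d) j : `|v ord0 j| <= `|v|.
Proof.
rewrite [leRHS]/Num.Def.normr /= mx_normrE.
by apply/bigmax_geP; right; exists (ord0, j).
Qed.

Let C := \sum_(j < d) N (delta_mx ord0 j).

Lemma is_norm_le_mx_norm v : N v <= C * `|v|.
Proof.
case: N_norm => N_ge0 _ NZ _.
rewrite {1}(row_sum_delta v); apply: le_trans (is_norm_sum _) _.
rewrite mulr_suml; apply: ler_sum => j _; rewrite NZ mulrC.
by rewrite ler_wpM2l // coord_le_mx_norm.
Qed.

Lemma is_norm_continuous : continuous N.
Proof.
have C_ge0 : 0 <= C by apply: sumr_ge0 => j _; case: N_norm.
move=> a; apply/(@cvgrPdist_lt _ _ _ (nbhs a) (nbhs_filter a)) => e e0.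
have eC : 0 < e / (C + 1) by rewrite divr_gt0 // ltr_wpDl.
near=> b; have ab : `|a - b| < e / (C + 1) by near: b; apply: cvgr_dist_lt.
apply: le_lt_trans (is_norm_dist_le a b) _.
apply: le_lt_trans (is_norm_le_mx_norm _) _.
rewrite ltr_pdivlMr ?ltr_wpDl // in ab.
by apply: le_lt_trans ab; rewrite mulrC ler_wpM2l // lerDl.
Unshelve. all: by end_near.
Qed.

(* By compactness of the unit sphere of the max norm, on which [N] attains
   a positive minimum. *)
Lemma is_norm_ge_mx_norm : exists2 m, 0 < m & forall v, m * `|v| <= N v.
Proof.
case: N_norm => N_ge0 N_eq0 NZ _.
have [[v v0]|all0] := pselect (exists v : 'rV[R]_d, v != 0); last first.
  exists 1 => // u; suff -> : u = 0 by rewrite normr0 mulr0.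
  by apply: contra_notP all0 => /eqP u0; exists u.
pose S := [set u : 'rV[R]_d | `|u| = 1].
have normalize u : u != 0 -> `|u|^-1 *: u \in S.
  by move=> u0; rewrite inE /S /= normrZ normfV normr_id mulVf // normr_eq0.
have S_compact : compact S.
  apply: bounded_closed_compact.
    by apply: filterS (nbhs_pinfty_ge (num_real 1)) => M M1 u /= ->.
  apply: (@preimage_closed _ _ _ [set r : R | r = 1]); last exact: closed_eq.
  by move=> u _; exact: norm_continuous.
have [c Sc c_min] := EVT_min_rV (ex_intro _ _ (set_mem (normalize v v0)))
  S_compact (continuous_subspaceT is_norm_continuous).
have c1 : `|c| = 1 by move: Sc; rewrite inE.
have Nc : 0 < N c.
  rewrite lt_def N_ge0 andbT; apply/eqP => /N_eq0 c0.
  by move: c1; rewrite c0 normr0 => /eqP; rewrite eq_sym oner_eq0.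
exists (N c) => // u; have [->|u0] := eqVneq u 0.
  by rewrite normr0 mulr0 N_ge0.
have := c_min _ (normalize u u0); rewrite NZ normfV normr_id.
by rewrite -ler_pdivlMr ?normr_gt0 // mulrC.
Qed.

Lemma dotv_le_is_norm (z : 'rV[R]_d) :
  exists2 K, 0 <= K & forall v, `|dotv v z| <= K * N v.
Proof.
have [m m0 Nm] := is_norm_ge_mx_norm.
set s := \sum_(j < d) `|z ord0 j|.
have s_ge0 : 0 <= s by exact: sumr_ge0.
exists (s / m) => [|v]; first by rewrite divr_ge0 // ltW.
apply: le_trans (_ : s * `|v| <= _).
  apply: le_trans (ler_norm_sum _ _ _) _; rewrite mulr_suml.
  by apply: ler_sum => j _; rewrite normrM mulrC ler_wpM2l // coord_le_mx_norm.
by rewrite -mulrA ler_wpM2l // ler_pdivlMl // mulrC.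
Qed.

End Norms.

Section EmpiricalLoss.
Variables (R : realType) (d n : nat) (l : R -> R).
Variables (x : 'I_n -> 'rV[R]_d) (y : 'I_n -> R).

Local Notation L := (emp_loss l x y).

Lemma dotvDl (u v z : 'rV[R]_d) : dotv (u + v) z = dotv u z + dotv v z.
Proof.
by rewrite /dotv -big_split; apply: eq_bigr => j _; rewrite mxE mulrDl.
Qed.

Lemma dotvZl (c : R) (u z : 'rV[R]_d) : dotv (c *: u) z = c * dotv u z.
Proof.
by rewrite /dotv mulr_sumr; apply: eq_bigr => j _; rewrite mxE mulrA.
Qed.

Lemma differentiable_dotv (z w : 'rV[R]_d) :
  differentiable (fun u => dotv u z) w.
Proof.
have -> : (fun u => dotv u z) =
    \sum_(j < d) (fun u : 'rV[R]_d => u ord0 j) * cst (z ord0 j).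
  by apply/funext => u; rewrite /dotv fct_sumE.
apply: differentiable_sum => j; apply: differentiableM.
  exact: differentiable_coord.
exact: differentiable_cst.
Qed.

Lemma emp_loss_convex : convex_fun l -> convex_fun L.
Proof.
move=> l_convex u v t t0 t1; rewrite /emp_loss.
rewrite mulrCA [X in _ <= _ + X]mulrCA -mulrDr ler_wpM2l ?invr_ge0 //.
rewrite !mulr_sumr -big_split /=; apply: ler_sum => i _.
rewrite dotvDl !dotvZl.
have -> : y i * (t * dotv u (x i) + (1 - t) * dotv v (x i)) =
    t * (y i * dotv u (x i)) + (1 - t) * (y i * dotv v (x i)) by ring.
exact: l_convex.
Qed.

Lemma differentiable_emp_loss w :
  (forall u, differentiable l u) -> differentiable L w.
Proof.
move=> l_diff.
have -> : L = n%:R^-1 *: \sum_(i < n) (l \o (y i *: fun u => dotv u (x i))).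
  by apply/funext => u; rewrite /emp_loss /= fct_sumE.
apply/differentiableZ/differentiable_sum => i.
apply: differentiable_comp => //.
by apply: differentiableZ; exact: differentiable_dotv.
Qed.

Hypothesis l_ge0 : forall u, 0 <= l u.

Lemma emp_loss_ge0 w : 0 <= L w.
Proof. by rewrite /emp_loss mulr_ge0 ?invr_ge0 // sumr_ge0. Qed.

Lemma emp_loss_ge_term w i : n%:R^-1 * l (y i * dotv w (x i)) <= L w.
Proof.
rewrite /emp_loss ler_wpM2l ?invr_ge0 //.
by rewrite (bigD1 i) //= lerDl sumr_ge0.
Qed.

Hypothesis l_noninc : forall u v, u <= v -> l v <= l u.

(* Scaling a separator [ws] pushes every margin beyond any given [v]. *)
Lemma emp_loss_inf0 :
  (0 < n)%N -> (exists ws, forall i, 0 < y i * dotv ws (x i)) ->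
  (forall e, 0 < e -> exists v, l v < e) ->
  forall e, 0 < e -> exists w, L w < e.
Proof.
move=> n0 [ws ws_sep] l_inf0 e e0; have [v lv] := l_inf0 e e0.
have inv_margin_ge0 j : 0 <= (y j * dotv ws (x j))^-1 by rewrite invr_ge0 ltW.
exists ((`|v| * \sum_i (y i * dotv ws (x i))^-1) *: ws).
apply: le_lt_trans lv; rewrite /emp_loss.
rewrite ler_pdivrMl ?ltr0n // mulr_natl -[X in _ *+ X]card_ord -sumr_const.
apply: ler_sum => i _; apply: l_noninc; rewrite dotvZl mulrCA.
apply: le_trans (ler_norm v) _; rewrite -mulrA -[leLHS]mulr1 ler_wpM2l //.
rewrite (bigD1 i) //= mulrDl mulVf ?lt0r_neq0 // lerDl.
by rewrite mulr_ge0 ?sumr_ge0 // ltW.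
Qed.

Lemma emp_loss_norm_ball_ge (N : 'rV[R]_d -> R) :
  is_norm N -> (0 < n)%N -> (forall u, 0 < l u) ->
  forall M, exists2 c, 0 < c & forall w, N w <= M -> c <= L w.
Proof.
move=> N_norm n0 l_gt0 M; pose i0 := Ordinal n0.
have [K K0 HK] := dotv_le_is_norm N_norm (x i0).
exists (n%:R^-1 * l (`|y i0| * (K * M))) => [|w NwM].
  by rewrite mulr_gt0 ?invr_gt0 ?ltr0n.
apply: le_trans (emp_loss_ge_term w i0); rewrite ler_wpM2l ?invr_ge0 //.
apply: l_noninc; apply: le_trans (ler_norm _) _.
by rewrite normrM ler_wpM2l // (le_trans (HK w)) // ler_wpM2l.
Qed.

End EmpiricalLoss.

Lemma sgr_margin_gt0 (R : realDomainType) (a b : R) :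
  (b = 1 \/ b = -1) -> Num.sg a = b -> 0 < b * a.
Proof.
move=> b1 sg_ab; rewrite -sg_ab -normrEsg normr_gt0 -sgr_eq0 sg_ab.
by case: b1 => ->; rewrite ?oppr_eq0 oner_eq0.
Qed.

Theorem lemma3 (R : realType) (d n : nat) (x : 'I_n -> 'rV[R]_d) (y : 'I_n -> R)
  (l : R -> R) (psi : 'rV[R]_d -> R) (eta : R) (w : nat -> 'rV[R]_d) :
  (0 < n)%N ->
  (forall i, y i = 1 \/ y i = -1) ->
  (exists wstar : 'rV[R]_d, forall i, Num.sg (dotv wstar (x i)) = y i) ->
  (forall u : R, differentiable l u) ->
  (forall u v : R, u < v -> l v < l u) ->
  convex_fun l ->
  (forall u : R, exists v : R, l v < l u) ->
  (forall u : R, 0 <= l u) ->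
  (forall e : R, 0 < e -> exists u : R, l u < e) ->
  (forall v : 'rV[R]_d, differentiable psi v) ->
  strictly_convex_fun psi ->
  0 < eta ->
  convex_fun (fun v => psi v - eta * emp_loss l x y v) ->
  (forall (t : nat) (v : 'rV[R]_d),
     'd psi (w t.+1) v = 'd psi (w t) v - eta * 'd (emp_loss l x y) (w t) v) ->
  (fun t => emp_loss l x y (w t)) @ \oo --> (0 : R) /\
  (forall N : 'rV[R]_d -> R, is_norm N ->
     forall M : R, exists T : nat, forall t : nat, (T <= t)%N -> M < N (w t)).
Proof.
(* That [l] does not attain its minimum already follows from its strict decrease. *)
move=> n0 y1 [ws ws_sg] l_diff l_dec l_convex _ l_ge0 l_inf0 psi_diff psi_sconvex
  eta_gt0 psi_etaL_convex mirror_update.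
have l_noninc u v : u <= v -> l v <= l u.
  by rewrite le_eqVlt => /predU1P[->//|/l_dec/ltW].
have l_gt0 u : 0 < l u by apply: le_lt_trans (l_ge0 (u + 1)) (l_dec _ _ _); lra.
have ws_sep i : 0 < y i * dotv ws (x i) by exact: sgr_margin_gt0.
have loss_cvg0 : (fun t => emp_loss l x y (w t)) @ \oo --> 0.
  have L_diff v := differentiable_emp_loss x y v l_diff.
  apply: (mirror_descent_cvg0 (strictly_convex_funW psi_sconvex) psi_diff
    (emp_loss_convex x y l_convex) L_diff eta_gt0 psi_etaL_convex
    mirror_update (emp_loss_ge0 x y l_ge0)).
  exact: emp_loss_inf0 l_noninc n0 (ex_intro _ ws ws_sep) l_inf0.
split=> // N N_norm; apply: cvg0_eventually_gt loss_cvg0 _.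
exact: emp_loss_norm_ball_ge.
Qed.
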